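(* Let $p$ be a nonnegative integer. Every subcubic tree with $p$ leaves contains $\lfloor p/2\rfloor$ pairwise vertex-disjoint leaf-to-leaf paths.
   Context: A graph is subcubic if every vertex has degree at most $3$. A leaf-to-leaf path in a tree is a path whose two endvertices are distinct leaves of the tree. *)

(* finite simple graphs as symmetric irreflexive relations. *)
From mathcomp Require Import all_boot.
Set Implicit Arguments. Unset Strict Implicit. Unset Printing Implicit Defensive.

Section Graphs.
Variables (T : finType) (e : rel T).

Definition deg (x : T) : nat := #|[set y | e x y]|.

Definition leaf (x : T) : bool := deg x == 1.

Definition leaves : {set T} := [set x | leaf x].

Definition subcubic : Prop := forall x, deg x <= 3.

Definition has_cycle : Prop :=
  exists c : seq T, [/\ 3 <= size c, uniq c & cycle e c].

Definition is_tree : Prop :=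
  [/\ 0 < #|T|, (forall x y, connect e x y) & ~ has_cycle].

Definition leaf_to_leaf_path (q : seq T) : bool :=
  if q is x :: s then
    [&& path e x s, uniq q, leaf x, leaf (last x s) & x != last x s]
  else false.

Definition vdisjoint (a b : seq T) : bool := all (fun x => x \notin b) a.

End Graphs.

From mathcomp Require Import all_boot.
Set Implicit Arguments.
Unset Strict Implicit.
Unset Printing Implicit Defensive.

(** We prove the stronger statement for a subtree S with a set L of terminals
    of degree at most 2 in S (initially the leaves): S contains [|L|/2]
    disjoint paths joining terminals. Induct on |S| and take a pendant vertex
    x0 of S, with neighbour x1. If x0 is not a terminal, delete it. If x0 and
    x1 are both terminals, use the path x0 x1 and delete both; since x1 has
    degree at most 2, what remains is connected. Otherwise delete x0 and make
    x1 a terminal instead: it loses a neighbour, so subcubicity gives it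
    degree at most 2, and the path ending at x1, if any, is extended to x0. *)

Section Paths.
Variables (T : finType) (r : rel T).

Lemma deg_subrel (r' : rel T) x : subrel r r' -> deg r x <= deg r' x.
Proof.
by move=> rr'; apply: subset_leq_card; apply/subsetP => y; rewrite !inE => /rr'.
Qed.

Lemma two_neighbors_deg v a b : r v a -> r v b -> a != b -> 1 < deg r v.
Proof. by move=> va vb ab; apply/card_gt1P; exists a, b; rewrite !inE. Qed.

Lemma longest_path x0 s0 : path r x0 s0 -> uniq (x0 :: s0) ->
  exists x s, [/\ path r x s, uniq (x :: s) &
    forall y t, path r y t -> uniq (y :: t) -> size t <= size s].
Proof.
pose P n := [exists t : n.+1.-tuple T, path r (thead t) (behead t) && uniq t].
have P_size y t : path r y t -> uniq (y :: t) -> P (size t).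
  by move=> yt ut; apply/existsP; exists (in_tuple (y :: t)); rewrite /= yt.
have P_bound n : P n -> n <= #|T|.
  case/existsP => t /andP[_ ut]; apply: ltnW.
  by rewrite -(size_tuple t) -(card_uniqP ut) max_card.
move=> ps us; case: (@ex_maxnP P _ (ex_intro P _ (P_size _ _ ps us)) P_bound).
move=> n /existsP[[[|x s] //= sz]] /andP[pxs uxs] longest.
exists x, s; split=> // y t yt ut.
by rewrite -ltnS (eqP sz); apply/longest/(P_size y).
Qed.

Hypotheses (r_sym : symmetric r) (r_acyclic : ~ has_cycle r).

Lemma acyclic_chord x s u : path r x s -> uniq (x :: s) ->
  u \in s -> r x u -> u = head x s.
Proof.
move=> pxs uxs us xu; case/splitPr: us pxs uxs => s1 s2.
case: s1 => [|y s1] // pxs uxs; exfalso; apply: r_acyclic.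
exists (x :: rcons (y :: s1) u); split.
- by rewrite /= size_rcons.
- apply: subseq_uniq uxs; rewrite -cats1 -!cat_cons.
  by apply: cat_subseq; rewrite /= !eqxx ?sub0seq ?subseq_refl.
- rewrite /cycle rcons_path rcons_path /= last_rcons.
  by move: pxs; rewrite cat_path /= => /and3P[-> -> _]; rewrite r_sym xu.
Qed.

End Paths.

Section TerminalPaths.
Variable T : finType.
Implicit Types (r : rel T) (L : {set T}) (q : seq T).

Definition terminal_path r L q :=
  if q is x :: s then
    [&& path r x s, uniq q, x \in L, last x s \in L & x != last x s]
  else false.

Lemma terminal_path_sub r r' L L' q : subrel r r' -> L \subset L' ->
  terminal_path r L q -> terminal_path r' L' q.
Proof.
move=> rr' /subsetP LL'; case: q => [|x s] // /and5P[pxs uxs xL lL xl].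
by apply/and5P; split; rewrite ?(sub_path rr' pxs) ?LL'.
Qed.

Definition attach (x0 x1 : T) q :=
  if q is x :: s then
    if x == x1 then x0 :: q else if last x s == x1 then rcons q x0 else q
  else q.

Lemma mem_attach x0 x1 q z :
  z \in attach x0 x1 q -> z \in q \/ z = x0 /\ x1 \in q.
Proof.
case: q => [|x s] //=; case: ifP => [/eqP <-|_].
  by rewrite inE => /predU1P[->|]; [right; rewrite mem_head | left].
case: ifP => [/eqP <-|_]; last by left.
rewrite -rcons_cons mem_rcons inE => /predU1P[->|]; last by left.
by right; rewrite mem_last.
Qed.

Lemma vdisjoint_attach x0 x1 q q' : x0 \notin q -> x0 \notin q' ->
  vdisjoint q q' -> vdisjoint (attach x0 x1 q) (attach x0 x1 q').
Proof.
move=> x0q x0q' /allP qq'; apply/allP => z /mem_attach[zq|[-> x1q]];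
  apply/negP => /mem_attach[zq'|[zx0 x1q']].
- by move: (qq' z zq); rewrite zq'.
- by move: x0q; rewrite -zx0 zq.
- by rewrite zq' in x0q'.
- by move: (qq' x1 x1q); rewrite x1q'.
Qed.

Lemma terminal_path_attach r L x0 x1 q : symmetric r -> r x0 x1 ->
  x0 \in L -> x0 \notin q -> terminal_path r (x1 |: (L :\ x0)) q ->
  terminal_path r L (attach x0 x1 q).
Proof.
move=> r_sym x01 x0L; case: q => [|x s] // x0q /and5P[pxs uxs xL lL xl].
have inL z : z != x1 -> z \in x1 |: (L :\ x0) -> z \in L.
  by rewrite !inE => /negbTE-> /andP[].
have x0l : x0 != last x s by apply: contraNneq x0q => ->; rewrite mem_last.
rewrite /attach; case: ifP => [/eqP x_x1 | /negbT x_x1].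
  subst x1; apply/and5P; split; rewrite /= ?x01 ?cons_uniq ?x0q //.
  by rewrite inL // eq_sym.
case: ifP => [/eqP l_x1 | /negbT l_x1]; last first.
  by apply/and5P; split; rewrite ?inL.
subst x1; rewrite rcons_cons; apply/and5P; split.
- by rewrite rcons_path pxs r_sym.
- by rewrite -rcons_cons rcons_uniq x0q.
- by rewrite inL // eq_sym.
- by rewrite last_rcons.
- by rewrite last_rcons; apply: contraNneq x0q => ->; rewrite mem_head.
Qed.

End TerminalPaths.

Section InducedSubgraphs.
Variables (T : finType) (e : rel T).
Hypotheses (e_sym : symmetric e) (e_irr : irreflexive e).
Hypotheses (e_acyclic : ~ has_cycle e) (e_subcubic : subcubic e).
Implicit Types (S L : {set T}).

Definition induced S : rel T := fun x y => [&& x \in S, y \in S & e x y].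

Lemma induced_sym S : symmetric (induced S).
Proof. by move=> x y; rewrite /induced e_sym; do 2 case: (_ \in S). Qed.

Lemma induced_irr S : irreflexive (induced S).
Proof. by move=> x; rewrite /induced e_irr !andbF. Qed.

Lemma induced_sub S : subrel (induced S) e.
Proof. by move=> x y /and3P[]. Qed.

Lemma induced_subset S S' : S' \subset S -> subrel (induced S') (induced S).
Proof. by move=> /subsetP SS' x y /and3P[/SS' xS /SS' yS xy]; apply/and3P. Qed.

Lemma induced_acyclic S : ~ has_cycle (induced S).
Proof.
case=> c [c3 uc cc]; apply: e_acyclic; exists c.
by split=> //; apply: sub_cycle cc; apply: induced_sub.
Qed.

Lemma induced_path_sub S x s : path (induced S) x s -> {subset s <= S}.
Proof.
elim: s x => [|y s IHs] x //= /andP[/and3P[_ yS _] pys] z.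
by rewrite inE => /predU1P[-> // |]; apply: IHs pys z.
Qed.

Lemma deg_induced_subset S S' x :
  S' \subset S -> deg (induced S') x <= deg (induced S) x.
Proof. by move=> SS'; apply/deg_subrel/induced_subset. Qed.

Lemma deg_induced_setD1 S u v :
  induced S u v -> deg (induced (S :\ v)) u < deg (induced S) u.
Proof.
move=> uv; apply: proper_card; apply/properP; split.
  by apply/subsetP => y; rewrite !inE; apply/induced_subset/subsetDl.
by exists v; rewrite !inE // /induced setD11 andbF.
Qed.

Definition connected_in S := {in S &, forall x y, connect (induced S) x y}.

(* A vertex inside a shortest path has two distinct neighbours on it. *)
Lemma connected_in_setD1 S v :
  connected_in S -> deg (induced S) v <= 1 -> connected_in (S :\ v).
Proof.
move=> connS deg_v x y; rewrite !inE => /andP[xv xS] /andP[yv yS].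
have /connectP[p pxp y_last] := connS x y xS yS; move: yv; rewrite {y yS}y_last.
case: (shortenP pxp) => q pxq uxq _ lv {p pxp}.
have vq : v \notin q.
  apply/negP => vq; case/splitPr: vq pxq uxq lv => q1 [|z q2].
    by rewrite last_cat eqxx.
  rewrite cat_path -cat_cons cat_uniq => /andP[_ /andP[av /andP[vz _]]].
  case/and3P=> _ /hasPn disj _ _; have /disj zq1 : z \in [:: v, z & q2].
    by rewrite !inE eqxx orbT.
  have az : last x q1 != z by apply: contraNneq zq1 => <-; rewrite mem_last.
  have va : induced S v (last x q1) by rewrite induced_sym.
  by have := two_neighbors_deg va vz az; rewrite ltnNge deg_v.
have qS := induced_path_sub pxq; apply/connectP; exists q => //.
apply: (sub_in_path (P := mem (S :\ v))) pxq.
  by move=> a b aSv bSv /induced_sub ab; apply/and3P.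
apply/allP => z; rewrite inE => /predU1P[-> | zq]; apply/setD1P; split=> //.
  by apply: contraNneq vq => <-.
exact: qS.
Qed.

(* The first vertex of a longest path is pendant. *)
Lemma exists_pendant S : connected_in S -> 1 < #|S| ->
  exists x0 x1, forall y, induced S x0 y = (y == x1).
Proof.
move=> connS /card_gt1P[a [b [aS bS ab]]].
have [c ac] : exists c, induced S a c.
  have /connectP[[|c p] /= pab b_last] := connS a b aS bS.
    by rewrite b_last eqxx in ab.
  by exists c; case/andP: pab.
have ac_path : path (induced S) a [:: c] by rewrite /= ac.
have ac_uniq : uniq [:: a; c].
  by rewrite /= inE andbT; apply: contraTneq ac => ->; rewrite induced_irr.
have [x [[|x1 s] [pxs uxs longest]]] := longest_path ac_path ac_uniq.
  by have := longest _ _ ac_path ac_uniq.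
exists x, x1 => y; apply/idP/eqP => [xy | ->]; last by case/andP: pxs.
have [ys | yNs] := boolP (y \in x1 :: s).
  exact: (acyclic_chord (@induced_sym S) (@induced_acyclic S) pxs uxs ys xy).
have yx : y != x by apply: contraTneq xy => ->; rewrite induced_irr.
have pyx : path (induced S) y [:: x, x1 & s] by apply/andP; rewrite induced_sym.
have uyx : uniq [:: y, x, x1 & s].
  by rewrite cons_uniq uxs andbT in_cons negb_or yx.
by have := longest _ _ pyx uyx; rewrite ltnn.
Qed.

Definition packable S L := exists P : seq (seq T),
  [/\ size P = #|L|./2, all (terminal_path (induced S) L) P &
      pairwise (@vdisjoint T) P].

Lemma terminal_path_induced_sub S L q :
  terminal_path (induced S) L q -> {subset q <= S}.
Proof.
case: q => [|x s] // /and5P[pxs _ _ _ xl] z.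
rewrite inE => /predU1P[-> | zs]; last exact: (induced_path_sub pxs zs).
by case: s pxs xl => [|y s] /=; [rewrite eqxx | case/andP => /and3P[]].
Qed.

Lemma packable_small S L : #|L| <= 1 -> packable S L.
Proof. by move=> L_le1; exists [::]; split=> //; case: #|L| L_le1 => [|[]]. Qed.

Lemma packable_subset S S' L : S' \subset S -> packable S' L -> packable S L.
Proof.
move=> SS' [P [sizeP pathsP disjP]]; exists P; split => //.
apply: sub_all pathsP => q.
exact: terminal_path_sub (induced_subset SS') (subxx L).
Qed.

Lemma packable_cons S L x0 x1 : induced S x0 x1 -> x0 \in L -> x1 \in L ->
  packable (S :\ x0 :\ x1) (L :\ x0 :\ x1) -> packable S L.
Proof.
move=> x01 x0L x1L [P [sizeP pathsP disjP]].
have x0x1 : x0 != x1 by apply: contraTneq x01 => ->; rewrite induced_irr.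
have outP q : q \in P -> (x0 \notin q) && (x1 \notin q).
  move=> /(allP pathsP)/terminal_path_induced_sub qS.
  by apply/andP; split; apply/negP => /qS; rewrite !inE eqxx ?andbF.
exists ([:: x0; x1] :: P); split.
- rewrite /= sizeP (cardsD1 x0 L) (cardsD1 x1 (L :\ x0)) x0L !inE x1L.
  by rewrite eq_sym x0x1.
- apply/andP; split; first by apply/and5P; split; rewrite /= ?x01 ?inE ?x0x1.
  have sub2 A : A :\ x0 :\ x1 \subset A.
    exact: subset_trans (subsetDl _ _) (subsetDl _ _).
  apply: sub_all pathsP => q.
  exact: terminal_path_sub (induced_subset (sub2 S)) (sub2 L).
- by rewrite pairwise_cons disjP andbT; apply/allP => q /outP; rewrite /= andbT.
Qed.

Lemma packable_attach S L x0 x1 : induced S x0 x1 -> x0 \in L -> x1 \notin L ->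
  packable (S :\ x0) (x1 |: (L :\ x0)) -> packable S L.
Proof.
move=> x01 x0L x1L [P [sizeP pathsP disjP]].
have x0P q : q \in P -> x0 \notin q.
  move=> /(allP pathsP)/terminal_path_induced_sub qS.
  by apply/negP => /qS; rewrite !inE eqxx.
exists (map (attach x0 x1) P); split.
- by rewrite size_map sizeP cardsU1 (cardsD1 x0 L) x0L !inE negb_and x1L orbT.
- rewrite all_map; apply/allP => q qP /=.
  apply: terminal_path_attach (@induced_sym S) x01 x0L (x0P q qP) _.
  have /allP/(_ q qP) := pathsP.
  exact: terminal_path_sub (induced_subset (subsetDl _ _)) (subxx _).
- rewrite pairwise_map.
  apply: (sub_in_pairwise (P := [pred q | x0 \notin q])) disjP.
    by move=> q q'; apply: vdisjoint_attach.
  exact/allP.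
Qed.

Lemma terminal_packing S L : connected_in S -> L \subset S ->
  {in L, forall x, deg (induced S) x <= 2} -> packable S L.
Proof.
have [n] := ubnP #|S|; elim: n S L => // n IH S L S_lt connS LS deg_L.
have [S_le1 | S_gt1] := leqP #|S| 1.
  by apply: packable_small; apply: leq_trans (subset_leq_card LS) S_le1.
have [x0 [x1 nbr_x0]] := exists_pendant connS S_gt1.
have x01 : induced S x0 x1 by rewrite nbr_x0.
have [x0S x1S _] := and3P x01.
have x0x1 : x0 != x1 by rewrite -nbr_x0 induced_irr.
have deg_x0 : deg (induced S) x0 <= 1.
  by rewrite /deg -(cards1 x1); apply/eq_leq/eq_card => y; rewrite !inE nbr_x0.
have conn0 := connected_in_setD1 connS deg_x0.
have S0_lt : #|S :\ x0| < n.
  by move: S_lt; rewrite (cardsD1 x0 S) x0S.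
have S0S : S :\ x0 \subset S := subsetDl _ _.
have deg_L0 S' : S' \subset S -> {in L, forall x, deg (induced S') x <= 2}.
  by move=> S'S x /deg_L; apply: leq_trans (deg_induced_subset x S'S).
have [x0L | x0L] := boolP (x0 \in L); last first.
  apply: (packable_subset S0S); apply: IH S0_lt conn0 _ (deg_L0 _ S0S).
  by rewrite subsetD1 LS.
have deg_x1 : deg (induced (S :\ x0)) x1 < deg (induced S) x1.
  by apply: deg_induced_setD1; rewrite induced_sym.
have [x1L | x1L] := boolP (x1 \in L).
  apply: (packable_cons x01 x0L x1L); apply: IH.
  - exact: leq_ltn_trans (subset_leq_card (subsetDl _ _)) S0_lt.
  - apply: connected_in_setD1 conn0 _.
    by rewrite -ltnS; apply: leq_trans deg_x1 (deg_L _ x1L).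
  - by do 2 apply: setSD.
  - move=> x /setD1P[_ /setD1P[_ xL]]; apply: deg_L0 xL.
    exact: subset_trans (subsetDl _ _) S0S.
apply: (packable_attach x01 x0L x1L); apply: IH S0_lt conn0 _ _.
  by rewrite subUset sub1set setSD // !inE eq_sym x0x1 x1S.
move=> x; rewrite !inE => /predU1P[-> | /andP[_ xL]]; last exact: deg_L0 xL.
rewrite -ltnS; apply: leq_trans deg_x1 (leq_trans _ (e_subcubic x1)).
exact/deg_subrel/induced_sub.
Qed.

End InducedSubgraphs.

Theorem lemma5 (p : nat) (T : finType) (e : rel T)
    (e_sym : symmetric e) (e_irr : irreflexive e)
    (tree : is_tree e) (sc : subcubic e)
    (hp : #|leaves e| = p) :
  exists P : seq (seq T),
    [/\ size P = p./2,
        all (leaf_to_leaf_path e) P &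
        pairwise (@vdisjoint T) P].
Proof.
case: tree => _ e_conn e_acyclic.
have induced_setT : induced e setT =2 e by move=> x y; rewrite /induced !inE.
have [|||P [sizeP pathsP disjP]] :=
  @terminal_packing _ _ e_sym e_irr e_acyclic sc setT (leaves e).
- by move=> x y _ _; rewrite (eq_connect induced_setT).
- exact: subsetT.
- move=> x; rewrite inE => /eqP leaf_x.
  by rewrite -leaf_x (leq_trans (deg_subrel x (@induced_sub _ e setT))).
exists P; split => //; first by rewrite sizeP hp.
apply: sub_all pathsP => -[|x s] //.
by move/(terminal_path_sub (@induced_sub _ e setT) (subxx _)); rewrite /= !inE.
Qed.
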